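(* The two-dimensional subalgebras of ${\rm A}_5$ are exactly $\langle e_1,e_2\rangle$, $\langle e_1\pm e_3,e_2\rangle$ and $\langle e_1,\alpha e_2+e_3\rangle$ ($\alpha\in\mathbb{C}$). Up to automorphisms of ${\rm A}_5$, every two-dimensional subalgebra is equivalent to one of $\langle e_1,e_2\rangle$, $\langle e_1+e_3,e_2\rangle$, $\langle e_1-e_3,e_2\rangle$, $\langle e_1,e_3\rangle$.
   Context: ${\rm A}_5$ is the complex algebra with basis $e_1,e_2,e_3$, unit $e_1$ ($e_1e_i=e_ie_1=e_i$), $e_2e_3=e_2$, $e_3e_2=-e_2$, $e_3e_3=e_1$; all other products of basis elements are zero. A subalgebra is a linear subspace closed under multiplication (it need not contain $e_1$). Equivalence up to automorphisms means one is mapped onto the other by an algebra automorphism. $\langle S\rangle$ denotes linear span. *)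

From HB Require Import structures.
From mathcomp Require Import all_boot all_order all_algebra.
From mathcomp Require Import complex.
From mathcomp Require Import reals.
Set Implicit Arguments. Unset Strict Implicit. Unset Printing Implicit Defensive.
Import Order.TTheory GRing.Theory Num.Theory.
Local Open Scope ring_scope.

(* The algebra A_5 over C = R[i] (R : realType, i.e. C is the complex numbers),
   realised on row vectors 'rV[C]_3; coordinate k (k = 0,1,2) is the
   coefficient of e_(k+1). *)
Section A5.
Variable R : realType.
Local Notation C := (R[i])%C.
Local Notation V := 'rV[C]_3.

Definition e1 : V := delta_mx 0 (inord 0).
Definition e2 : V := delta_mx 0 (inord 1).
Definition e3 : V := delta_mx 0 (inord 2).

Definition coord3 (x : V) (k : nat) : C := x 0 (inord k).

(* Bilinear extension of the multiplication table:
   e1 unit, e2 e3 = e2, e3 e2 = - e2, e3 e3 = e1, other products 0. *)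
Definition mulA5 (x y : V) : V :=
  let a1 := coord3 x 0 in let a2 := coord3 x 1 in let a3 := coord3 x 2 in
  let b1 := coord3 y 0 in let b2 := coord3 y 1 in let b3 := coord3 y 2 in
  (a1 * b1 + a3 * b3) *: e1
  + (a1 * b2 + a2 * b1 + a2 * b3 - a3 * b2) *: e2
  + (a1 * b3 + a3 * b1) *: e3.

Definition is_subalgA5 (U : {vspace V}) : Prop :=
  forall x y, x \in U -> y \in U -> mulA5 x y \in U.

Definition is_autA5 (f : V -> V) : Prop :=
  [/\ (forall (a : C) (x y : V), f (a *: x + y) = a *: f x + f y),
      bijective f &
      (forall x y, f (mulA5 x y) = mulA5 (f x) (f y))].

Definition aut_equivA5 (U W : {vspace V}) : Prop :=
  exists f, is_autA5 f /\ (forall y, y \in W <-> exists2 x, x \in U & f x = y).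
End A5.

From HB Require Import structures.
From mathcomp Require Import all_boot all_order all_algebra.
From mathcomp Require Import complex.
From mathcomp Require Import reals.
From mathcomp Require Import ring.
Set Implicit Arguments. Unset Strict Implicit. Unset Printing Implicit Defensive.
Import Order.TTheory GRing.Theory Num.Theory.
Local Open Scope ring_scope.

(* Every plane U of A_5 meets every other plane of the three-dimensional space
   in a nonzero vector.  If e2 is in U, then U = <x, e2> for some nonzero
   x = s e1 + t e3 in U, and x^2 = (s^2 + t^2) e1 + 2st e3 lies in U only if
   t (t - s) (t + s) = 0, so x is proportional to e1 or to e1 +- e3.  If e2 is
   not in U, a vector u = p e1 + q e2 of U satisfies u^2 - p u = pq e2, whence
   q = 0 and e1 is in U; a vector r e2 + t e3 of U then has t <> 0, and
   U = <e1, (r/t) e2 + e3>.  Finally, the shear fixing e1, e2 and sending e3 to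
   e3 - alpha e2 is an automorphism mapping <e1, alpha e2 + e3> onto <e1, e3>. *)

Section Planes.
Variables (K : fieldType) (vT : vectType K).
Implicit Types (U W : {vspace vT}) (a b x : vT).

Lemma memv_span2P a b x :
  reflect (exists s t, x = s *: a + t *: b) (x \in span [:: a; b]).
Proof.
rewrite span_cons span_seq1; apply: (iffP memv_addP).
  by case=> _ /vlineP [s ->] [_ /vlineP [t ->] ->]; exists s, t.
by case=> s [t ->]; exists (s *: a); last exists (t *: b); rewrite ?memvZ ?memv_line.
Qed.

Lemma free2 a b : b != 0 -> a \notin <[b]>%VS -> free [:: a; b].
Proof. by move=> b0 ab; rewrite free_cons seq1_free span_seq1 ab. Qed.

Lemma span2_basis U a b :
  \dim U = 2%N -> a \in U -> b \in U -> free [:: a; b] -> U = span [:: a; b].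
Proof.
move=> dU aU bU ab; apply/esym/span_basis; rewrite basisEfree ab dU leqnn andbT.
by apply/span_subvP => x; rewrite !inE => /orP [] /eqP ->.
Qed.

Lemma span2_scalel c a b : c != 0 -> span [:: c *: a; b] = span [:: a; b].
Proof.
move=> c0; rewrite !span_cons; congr (_ + _)%VS.
apply/eqP; rewrite eqEsubv -!memvE memvZ ?memv_line //=.
by rewrite -[a in a \in _](scalerK c0) memvZ ?memv_line.
Qed.

Lemma memv_cap_neq0 U W : (dim vT < \dim U + \dim W)%N ->
  exists x, [/\ x \in U, x \in W & x != 0].
Proof.
rewrite -dimv_sum_cap => lt_dim.
have : (U :&: W != 0)%VS.
  apply: contraTneq lt_dim => ->; rewrite dimv0 addn0 -leqNgt -dimvf.
  exact/dimvS/subvf.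
rewrite -vpick0 => nz; exists (vpick (U :&: W)%VS).
by have /memv_capP [] := memv_pick (U :&: W)%VS.
Qed.

End Planes.

Lemma free2_minor (K : fieldType) (n : nat) (a b : 'rV[K]_n) (i j : 'I_n) :
  a 0 i * b 0 j - a 0 j * b 0 i != 0 -> free [:: a; b].
Proof.
move=> minor_neq0; apply: free2.
  by apply: contraNneq minor_neq0 => ->; rewrite !mxE !mulr0 subrr.
by apply: contraNN minor_neq0 => /vlineP [k ->]; rewrite !mxE mulrAC subrr.
Qed.

Section A5.
Variable R : realType.
Local Notation C := (R[i])%C.
Local Notation V := 'rV[C]_3.
Implicit Types U : {vspace V}.

Definition vecA5 (a b c : C) : V := a *: e1 R + b *: e2 R + c *: e3 R.

Lemma vecA5E a b c (k : 'I_3) : vecA5 a b c 0 k = [:: a; b; c]`_k.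
Proof.
rewrite !mxE -!val_eqE /= !inordK //.
by case: k => [[|[|[|//]]] lt_k3] /=; rewrite ?mulr0 ?mulr1 ?addr0 ?add0r.
Qed.

Lemma coord3_vecA5 a b c k : (k < 3)%N -> coord3 (vecA5 a b c) k = [:: a; b; c]`_k.
Proof. by move=> lt_k3; rewrite /coord3 vecA5E inordK. Qed.

Lemma vecA5_coord3 x : x = vecA5 (coord3 x 0) (coord3 x 1) (coord3 x 2).
Proof.
apply/rowP => k; rewrite vecA5E /coord3.
by case: k => [[|[|[|//]]] lt_k3]; congr (x 0 _); apply/val_inj; rewrite /= inordK.
Qed.

Lemma vecA5_inj a b c a' b' c' :
  vecA5 a b c = vecA5 a' b' c' -> [/\ a = a', b = b' & c = c'].
Proof.
move=> eq_abc; have coord k := congr1 (fun x => coord3 x k) eq_abc.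
by move: (coord 0%N) (coord 1%N) (coord 2%N); rewrite !coord3_vecA5.
Qed.

Lemma vecA5D a b c a' b' c' :
  vecA5 a b c + vecA5 a' b' c' = vecA5 (a + a') (b + b') (c + c').
Proof. by apply/rowP => k; rewrite mxE !vecA5E; case: k => [[|[|[|]]]]. Qed.

Lemma vecA5Z s a b c : s *: vecA5 a b c = vecA5 (s * a) (s * b) (s * c).
Proof. by rewrite /vecA5 !scalerDr !scalerA. Qed.

Lemma vecA5N a b c : - vecA5 a b c = vecA5 (- a) (- b) (- c).
Proof. by rewrite -scaleN1r vecA5Z !mulN1r. Qed.

Lemma vecA5_e1 : e1 R = vecA5 1 0 0.
Proof. by rewrite /vecA5 scale1r !scale0r !addr0. Qed.
Lemma vecA5_e2 : e2 R = vecA5 0 1 0.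
Proof. by rewrite /vecA5 scale1r !scale0r addr0 add0r. Qed.
Lemma vecA5_e3 : e3 R = vecA5 0 0 1.
Proof. by rewrite /vecA5 scale1r !scale0r !add0r. Qed.
Lemma vecA5_0 : 0 = vecA5 0 0 0. Proof. by rewrite /vecA5 !scale0r !addr0. Qed.

Lemma mulA5_vecA5 a1 a2 a3 b1 b2 b3 :
  mulA5 (vecA5 a1 a2 a3) (vecA5 b1 b2 b3) =
  vecA5 (a1 * b1 + a3 * b3) (a1 * b2 + a2 * b1 + a2 * b3 - a3 * b2) (a1 * b3 + a3 * b1).
Proof. by rewrite /mulA5 !coord3_vecA5. Qed.

Ltac vecA5_norm :=
  rewrite ?vecA5_e1 ?vecA5_e2 ?vecA5_e3 ?vecA5_0 ?(vecA5N, vecA5D, vecA5Z, mulA5_vecA5).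
Ltac vecA5_ring := vecA5_norm; congr vecA5; ring.

Lemma free2_coord3 i j (a b : V) :
  coord3 a i * coord3 b j - coord3 a j * coord3 b i != 0 -> free [:: a; b].
Proof. exact: free2_minor. Qed.

Lemma subalgA5_span2 (a b : V) :
  (forall s t s' t', exists S T,
     mulA5 (s *: a + t *: b) (s' *: a + t' *: b) = S *: a + T *: b) ->
  is_subalgA5 (span [:: a; b]).
Proof.
move=> closed x y /memv_span2P [s [t ->]] /memv_span2P [s' [t' ->]].
by have [S [T ->]] := closed s t s' t'; apply/memv_span2P; exists S, T.
Qed.

Lemma subalgA5_listed U :
  [\/ U = span [:: e1 R; e2 R], U = span [:: e1 R + e3 R; e2 R],
      U = span [:: e1 R - e3 R; e2 R]
    | exists alpha : C, U = span [:: e1 R; alpha *: e2 R + e3 R]] ->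
  is_subalgA5 U /\ \dim U = 2%N.
Proof.
have free_e2 (w : V) : coord3 w 0 != 0 -> free [:: w; e2 R].
  move=> w0; apply: (@free2_coord3 0 1).
  by rewrite vecA5_e2 !coord3_vecA5 //= mulr1 mulr0 subr0.
case=> [|||[alpha]] ->; split; try apply/eqP.
- by apply: subalgA5_span2 => s t s' t'; exists (s * s'), (s * t' + t * s'); vecA5_ring.
- by apply: free_e2; rewrite vecA5_e1 coord3_vecA5 //= oner_neq0.
- by apply: subalgA5_span2 => s t s' t'; exists (2 * s * s'), (2 * t * s'); vecA5_ring.
- by apply: free_e2; vecA5_norm; rewrite coord3_vecA5 //= addr0 oner_neq0.
- by apply: subalgA5_span2 => s t s' t'; exists (2 * s * s'), (2 * s * t'); vecA5_ring.
- by apply: free_e2; vecA5_norm; rewrite coord3_vecA5 //= oppr0 addr0 oner_neq0.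
- apply: subalgA5_span2 => s t s' t'.
  by exists (s * s' + t * t'), (s * t' + t * s'); vecA5_ring.
- apply: (@free2_coord3 0 2); vecA5_norm; rewrite !coord3_vecA5 //=.
  by rewrite !(mulr0, mul0r, add0r, addr0, subr0, mulr1) oner_neq0.
Qed.

Lemma square_mem_span_e2 s t :
  mulA5 (vecA5 s 0 t) (vecA5 s 0 t) \in span [:: vecA5 s 0 t; e2 R] ->
  t * (t - s) * (t + s) = 0.
Proof.
case/memv_span2P => p [q]; vecA5_norm => /vecA5_inj [sq1 _ sq3].
have -> : t * (t - s) * (t + s) = t * (s * s + t * t) - s * (s * t + t * s) by ring.
by rewrite sq1 sq3; ring.
Qed.

Lemma subalgA5_e2_mem U : is_subalgA5 U -> \dim U = 2%N -> e2 R \in U ->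
  [\/ U = span [:: e1 R; e2 R], U = span [:: e1 R + e3 R; e2 R]
     | U = span [:: e1 R - e3 R; e2 R]].
Proof.
move=> subalgU dimU e2U.
have /eqnP dim13 : free [:: e1 R; e3 R].
  apply: (@free2_coord3 0 2); rewrite vecA5_e1 vecA5_e3 !coord3_vecA5 //=.
  by rewrite mulr1 mulr0 subr0 oner_neq0.
have /memv_cap_neq0 [_ [/memv_span2P [s [t ->]] xU x_neq0]] :
  (dim V < \dim (span [:: e1 R; e3 R]) + \dim U)%N by rewrite dimU dim13.
have def_x : s *: e1 R + t *: e3 R = vecA5 s 0 t by vecA5_ring.
rewrite def_x in xU x_neq0.
have defU : U = span [:: vecA5 s 0 t; e2 R].
  apply: span2_basis => //; apply: free2.
    by rewrite vecA5_e2 vecA5_0; apply/eqP => /vecA5_inj [_ /eqP]; rewrite oner_eq0.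
  apply: contraNN x_neq0 => /vlineP [k]; vecA5_norm => /vecA5_inj [-> _ ->].
  by rewrite mulr0.
have [w [def_x' listed_w]] : exists w, vecA5 s 0 t = s *: w /\
    [\/ w = e1 R, w = e1 R + e3 R | w = e1 R - e3 R].
  have := subalgU _ _ xU xU; rewrite {1}defU => /square_mem_span_e2 /eqP.
  rewrite !mulf_eq0 subr_eq0 addr_eq0 => /orP [/orP [/eqP t0 | /eqP ts] | /eqP ts].
  - by exists (e1 R); split; [rewrite t0; vecA5_ring | constructor 1].
  - by exists (e1 R + e3 R); split; [rewrite ts; vecA5_ring | constructor 2].
  - by exists (e1 R - e3 R); split; [rewrite ts; vecA5_ring | constructor 3].
have s_neq0 : s != 0 by apply: contraNneq x_neq0 => s0; rewrite def_x' s0 scale0r.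
by rewrite defU def_x' span2_scalel //; case: listed_w => ->; constructor.
Qed.

Lemma subalgA5_e1_mem U :
  is_subalgA5 U -> \dim U = 2%N -> e2 R \notin U -> e1 R \in U.
Proof.
move=> subalgU dimU e2U.
have /eqnP dim12 : free [:: e1 R; e2 R].
  apply: (@free2_coord3 0 1); rewrite vecA5_e1 vecA5_e2 !coord3_vecA5 //=.
  by rewrite mulr1 mulr0 subr0 oner_neq0.
have /memv_cap_neq0 [_ [/memv_span2P [p [q ->]] uU u_neq0]] :
  (dim V < \dim (span [:: e1 R; e2 R]) + \dim U)%N by rewrite dimU dim12.
have e2_coef0 c : c *: e2 R \in U -> c = 0 by rewrite rpredZeq (negbTE e2U) orbF => /eqP.
have /e2_coef0 /eqP : (p * q) *: e2 R \in U.
  have -> : (p * q) *: e2 R = mulA5 (p *: e1 R + q *: e2 R) (p *: e1 R + q *: e2 R)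
                               - p *: (p *: e1 R + q *: e2 R) by vecA5_ring.
  by rewrite memvB ?memvZ ?subalgU.
rewrite mulf_eq0 => /orP [/eqP p0 | /eqP q0].
  by move: uU u_neq0; rewrite p0 scale0r add0r => /e2_coef0 ->; rewrite scale0r eqxx.
move: uU u_neq0; rewrite q0 scale0r addr0 rpredZeq => /orP [/eqP -> | //].
by rewrite scale0r eqxx.
Qed.

Lemma subalgA5_e2_notin U : is_subalgA5 U -> \dim U = 2%N -> e2 R \notin U ->
  exists alpha : C, U = span [:: e1 R; alpha *: e2 R + e3 R].
Proof.
move=> subalgU dimU e2U.
have /eqnP dim23 : free [:: e2 R; e3 R].
  apply: (@free2_coord3 1 2); rewrite vecA5_e2 vecA5_e3 !coord3_vecA5 //=.
  by rewrite mulr1 mulr0 subr0 oner_neq0.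
have /memv_cap_neq0 [_ [/memv_span2P [r [t ->]] vU v_neq0]] :
  (dim V < \dim (span [:: e2 R; e3 R]) + \dim U)%N by rewrite dimU dim23.
have t_neq0 : t != 0.
  apply: contraNneq v_neq0 => t0; move: vU; rewrite t0 scale0r addr0.
  by rewrite rpredZeq (negbTE e2U) orbF => /eqP ->; rewrite scale0r.
exists (r / t); apply: span2_basis => //; first exact: subalgA5_e1_mem.
  have -> : (r / t) *: e2 R + e3 R = t^-1 *: (r *: e2 R + t *: e3 R).
    by rewrite scalerDr !scalerA mulrC mulVf ?scale1r.
  by rewrite memvZ.
apply: (@free2_coord3 0 2); vecA5_norm; rewrite !coord3_vecA5 //=.
by rewrite !(mulr0, mul0r, add0r, addr0, subr0, mulr1) oner_neq0.
Qed.

Lemma subalgA5_classification U : is_subalgA5 U -> \dim U = 2%N ->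
  [\/ U = span [:: e1 R; e2 R], U = span [:: e1 R + e3 R; e2 R],
      U = span [:: e1 R - e3 R; e2 R]
    | exists alpha : C, U = span [:: e1 R; alpha *: e2 R + e3 R]].
Proof.
move=> subalgU dimU; have [e2U | e2U] := boolP (e2 R \in U).
  by case: (subalgA5_e2_mem subalgU dimU e2U) => ->; constructor.
by constructor 4; apply: subalgA5_e2_notin.
Qed.

Lemma aut_equivA5_refl U : aut_equivA5 U U.
Proof.
exists id; split; first by split=> //; exists id.
by move=> y; split=> [yU | [x xU <-] //]; exists y.
Qed.

Lemma aut_equivA5_span2 f (a b : V) :
  is_autA5 f -> aut_equivA5 (span [:: a; b]) (span [:: f a; f b]).
Proof.
move=> aut_f; have [lin_f _ _] := aut_f.
have f0 : f 0 = 0 by have := lin_f (-1) 0 0; rewrite scaler0 addr0 scaleN1r addNr.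
have f_comb s t : f (s *: a + t *: b) = s *: f a + t *: f b.
  by rewrite lin_f -[t *: b]addr0 lin_f f0 addr0.
exists f; split=> // y; split.
  case/memv_span2P => s [t ->]; exists (s *: a + t *: b); last exact: f_comb.
  by apply/memv_span2P; exists s, t.
by case=> _ /memv_span2P [s [t ->]] <-; apply/memv_span2P; exists s, t; rewrite f_comb.
Qed.

Definition shearA5 (alpha : C) (x : V) : V := x - (alpha * coord3 x 2) *: e2 R.

Lemma shearA5_vecA5 alpha a b c :
  shearA5 alpha (vecA5 a b c) = vecA5 a (b - alpha * c) c.
Proof. by rewrite /shearA5 coord3_vecA5 //=; vecA5_ring. Qed.

Lemma shearA5K alpha : cancel (shearA5 alpha) (shearA5 (- alpha)).
Proof. by move=> x; rewrite [x]vecA5_coord3 !shearA5_vecA5; congr vecA5; ring. Qed.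

Lemma shearA5_aut alpha : is_autA5 (shearA5 alpha).
Proof.
split=> [c x y | | x y].
- rewrite [x]vecA5_coord3 [y]vecA5_coord3; vecA5_norm.
  by rewrite !shearA5_vecA5; vecA5_ring.
- exists (shearA5 (- alpha)); first exact: shearA5K.
  by have := shearA5K (- alpha); rewrite opprK.
- rewrite [x]vecA5_coord3 [y]vecA5_coord3 mulA5_vecA5 !shearA5_vecA5 mulA5_vecA5.
  by congr vecA5; ring.
Qed.

Lemma aut_equivA5_shear alpha :
  aut_equivA5 (span [:: e1 R; alpha *: e2 R + e3 R]) (span [:: e1 R; e3 R]).
Proof.
have := aut_equivA5_span2 (e1 R) (alpha *: e2 R + e3 R) (shearA5_aut alpha).
have -> : shearA5 alpha (e1 R) = e1 R.
  by rewrite vecA5_e1 shearA5_vecA5; congr vecA5; ring.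
suff -> : shearA5 alpha (alpha *: e2 R + e3 R) = e3 R by [].
by vecA5_norm; rewrite shearA5_vecA5; vecA5_ring.
Qed.

End A5.

Theorem mainTheorem13 (R : realType) :
  (forall U : {vspace 'rV[(R[i])%C]_3},
     (is_subalgA5 U /\ \dim U = 2%N) <->
     [\/ U = (span [:: e1 R; e2 R]),
         U = (span [:: e1 R + e3 R; e2 R]),
         U = (span [:: e1 R - e3 R; e2 R])
       | exists alpha : (R[i])%C, U = (span [:: e1 R; alpha *: e2 R + e3 R])])
  /\
  (forall U : {vspace 'rV[(R[i])%C]_3},
     is_subalgA5 U -> \dim U = 2%N ->
     [\/ aut_equivA5 U (span [:: e1 R; e2 R]),
         aut_equivA5 U (span [:: e1 R + e3 R; e2 R]),
         aut_equivA5 U (span [:: e1 R - e3 R; e2 R])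
       | aut_equivA5 U (span [:: e1 R; e3 R])]).
Proof.
split=> U.
  by split=> [[subalgU dimU] | /subalgA5_listed //]; exact: subalgA5_classification.
move=> subalgU dimU; case: (subalgA5_classification subalgU dimU) => [||| [alpha]] ->.
- by constructor 1; apply: aut_equivA5_refl.
- by constructor 2; apply: aut_equivA5_refl.
- by constructor 3; apply: aut_equivA5_refl.
- by constructor 4; apply: aut_equivA5_shear.
Qed.
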